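(* Let $N\ge1$, $\Omega=[1,N+1]$, and for $j=1,\ldots,N$ let $B_{1,j}(x)=1$ if $j\le x<j+1$ and $B_{1,j}(x)=0$ otherwise. Let $s=1$. If the distinct points $\{x_1,\ldots,x_m\}\subset\Omega$ are unisolvent for the $s$-sparse interpolation with the basis $\{B_{1,1},\ldots,B_{1,N}\}$ and the domain $\Omega$, then $m\ge N$.
   Context: Let $\mathbf U^s:=\{\sum_{j\in T}c_jB_{1,j}: T\subset\{1,\ldots,N\},\ \#T\le s,\ c_j\in\mathbb{C}\}$. A set of $m$ distinct points $\{x_1,\ldots,x_m\}\subset\Omega$ is unisolvent if whenever $f,g\in\mathbf U^s$ satisfy $f(x_j)=g(x_j)$ for $j=1,\ldots,m$, then $f\equiv g$. *)

From HB Require Import structures.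
From mathcomp Require Import all_boot all_order all_algebra.
From mathcomp Require Import reals complex.
Set Implicit Arguments. Unset Strict Implicit. Unset Printing Implicit Defensive.
Import Order.TTheory GRing.Theory Num.Theory.
Local Open Scope ring_scope.

Definition B1 (R : realType) (j : nat) (x : R) : complex R :=
  if (j%:R <= x) && (x < j%:R + 1) then 1 else 0.

Definition Omega (R : realType) (N : nat) (x : R) : Prop :=
  1 <= x /\ x <= N%:R + 1.

(* The s-sparse set U^s spanned by B_{1,1},...,B_{1,N}; the index j : 'I_N
   stands for B_{1, j+1}. *)
Definition Us (R : realType) (N s : nat) (f : R -> complex R) : Prop :=
  exists (T : {set 'I_N}) (c : 'I_N -> complex R),
    (#|T| <= s)%N /\ forall x, f x = \sum_(j in T) c j * B1 j.+1 x.

Definition unisolvent (R : realType) (N s m : nat) (pts : 'I_m -> R) : Prop :=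
  forall f g : R -> complex R, Us N s f -> Us N s g ->
    (forall i, f (pts i) = g (pts i)) -> forall x, Omega N x -> f x = g x.

(** The spline [B_{1,j}] is itself 1-sparse, and so is [0]; if no sample point
    fell into the cell [[j, j+1)], the two would agree on all samples but
    differ at [j], contradicting unisolvency.  Hence each of the [N] pairwise
    disjoint cells contains a sample point, and choosing one per cell is an
    injection of [N] into the [m] sample indices. *)
From HB Require Import structures.
From mathcomp Require Import all_boot all_order all_algebra.
From mathcomp Require Import reals complex.
Import Order.TTheory GRing.Theory Num.Theory.
Local Open Scope ring_scope.

Lemma unit_cell_inj {R : realDomainType} (a b : nat) (x : R) :
  a%:R <= x < a%:R + 1 -> b%:R <= x < b%:R + 1 -> a = b.
Proof.
wlog lt_ab : a b / (a < b)%N => [hwlog|].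
  by case: (ltngtP a b) => // [/hwlog|/hwlog] H Ha Hb; [apply: H | symmetry; apply: H].
move=> /andP[_ xa] /andP[bx _]; exfalso.
have : a%:R + 1 <= b%:R :> R by rewrite natr1 ler_nat.
by move=> /(lt_le_trans xa)/lt_le_trans/(_ bx); rewrite ltxx.
Qed.

Lemma B1_neq0 {R : realType} (j : nat) (x : R) :
  (B1 j x != 0) = (j%:R <= x < j%:R + 1).
Proof. by rewrite /B1; case: ifP; rewrite ?oner_eq0 ?eqxx. Qed.

Lemma B1_supp_inj {R : realType} (a b : nat) (x : R) :
  B1 a x != 0 -> B1 b x != 0 -> a = b.
Proof. by rewrite !B1_neq0; exact: unit_cell_inj. Qed.

Lemma B1_nat {R : realType} (j : nat) : B1 j (j%:R : R) = 1.
Proof. by rewrite /B1 lexx ltrDl ltr01. Qed.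

Lemma Us_B1 {R : realType} {N s : nat} (j : 'I_N) :
  (0 < s)%N -> Us N s (@B1 R j.+1).
Proof.
exists [set j], (fun _ => 1); split; first by rewrite cards1.
by move=> x; rewrite big_set1 mul1r.
Qed.

Lemma Us_0 (R : realType) (N s : nat) : Us N s (fun _ : R => 0).
Proof. by exists set0, (fun _ => 0); split; rewrite ?cards0 // => x; rewrite big_set0. Qed.

Lemma Omega_nat {R : realType} {N j : nat} : (0 < j <= N)%N -> Omega N (j%:R : R).
Proof.
case/andP=> j_gt0 j_le; split; first by rewrite ler1n.
by rewrite natr1 ler_nat ltnW.
Qed.

Lemma unisolvent_B1_sampled {R : realType} {N s m : nat} {pts : 'I_m -> R} :
  (0 < s)%N -> unisolvent N s pts ->
  forall j : 'I_N, exists i, B1 j.+1 (pts i) != 0.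
Proof.
move=> s_gt0 hU j; have [/existsP //|] := boolP [exists i, B1 j.+1 (pts i) != 0].
rewrite negb_exists => /forallP B1_pts0.
have {}B1_pts0 i : B1 j.+1 (pts i) = 0 by apply/eqP/negPn/B1_pts0.
have := hU _ _ (Us_B1 j s_gt0) (Us_0 R N s) B1_pts0 _ (Omega_nat (j:=j.+1) (ltn_ord j)).
by rewrite B1_nat; move=> /eqP; rewrite oner_eq0.
Qed.

Theorem proposition1 (R : realType) (N m : nat) (pts : 'I_m -> R) :
  (1 <= N)%N ->
  injective pts ->
  (forall i, Omega N (pts i)) ->
  unisolvent N 1 pts ->
  (N <= m)%N.
Proof.
move=> _ _ _ hU.
have [sample B1_sample] := fin_all_exists (unisolvent_B1_sampled (ltn0Sn 0) hU).
have sample_inj : injective sample.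
  move=> j k e; apply/val_inj/succn_inj.
  by have := B1_sample k; rewrite -e; apply: B1_supp_inj (B1_sample j).
by have := leq_card sample sample_inj; rewrite !card_ord.
Qed.
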